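(* $\mathrm{Aut}_0(H)$ is a normal subgroup of $\mathrm{Aut}_c(H)$, and $\mathrm{Aut}_c(H)$ is the internal semidirect product of $\mathrm{Aut}_0(H)$ and $\Theta=\{\theta_r:r\in\mathbb{Z}\}$, where $\theta_r:H\to H$ is the linear map $\theta_r(x^ny^m)=x^{n+r}y^m$.
   Context: Let $k$ be a field and $0\neq q\in k$ not a root of unity. $H=k_q[x,x^{-1},y]$ is the $k$-algebra generated by $x,x^{-1},y$ with $xx^{-1}=x^{-1}x=1$, $yx=qxy$, a Hopf algebra with $\Delta(x)=x\otimes x$, $\Delta(x^{-1})=x^{-1}\otimes x^{-1}$, $\Delta(y)=y\otimes x+1\otimes y$, $\varepsilon(x)=1$, $\varepsilon(y)=0$; $\{x^ny^m:n\in\mathbb{Z},m\in\mathbb{N}\}$ is a $k$-basis. $\mathrm{Aut}_c(H)$ is the group under composition of coalgebra automorphisms of $H$ and $\mathrm{Aut}_0(H)=\{\phi\in\mathrm{Aut}_c(H):\phi(1)=1\}$. (Each $\theta_r$ is a coalgebra automorphism of $H$.) *)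

From HB Require Import structures.
From mathcomp Require Import all_boot all_order all_algebra.
From mathcomp Require Import boolp classical_sets cardinality fsbigop.

Set Implicit Arguments.
Unset Strict Implicit.
Unset Printing Implicit Defensive.
Import Order.TTheory GRing.Theory Num.Theory.
Local Open Scope classical_set_scope.
Local Open Scope ring_scope.

(* H = k_q[x, x^-1, y] is modelled through its k-basis {x^n y^m : n in Z, m in N},
   indexed by pairs (n, m) : int * nat.  A vector of H is a finitely supported
   coefficient function B -> k; H (x) H has basis B * B. *)
Definition B := (int * nat)%type.

Definition finsupp (k : fieldType) (T : Type) (v : T -> k) : Prop :=
  finite_set [set t | v t != 0].

Definition ebasis (k : fieldType) (b : B) : B -> k := fun c => (b == c)%:R.

(* A k-linear endomorphism of H is given by the images M b of the basis vectors
   (each finitely supported): phi(x^n y^m) = sum_c M (n,m) c * x^c.1 y^c.2. *)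
Definition is_endo (k : fieldType) (M : B -> B -> k) : Prop :=
  forall b, finsupp (M b).

Definition app (k : fieldType) (M : B -> B -> k) (v : B -> k) : B -> k :=
  fun c => \sum_(b \in [set: B]) v b * M b c.

Definition lcomp (k : fieldType) (M N : B -> B -> k) : B -> B -> k :=
  fun b => app M (N b).

Definition idm (k : fieldType) : B -> B -> k := fun b => ebasis k b.

(* Comultiplication on basis vectors, from the Hopf structure:
   Delta(x^n) = x^n (x) x^n  and  Delta(x^n y^(m+1)) = Delta(x^n y^m) * (y (x) x + 1 (x) y)
   in the algebra H (x) H, using  y x = q x y:
     (x^a y^b (x) x^c y^d) (y (x) x) = x^a y^(b+1) (x) q^d x^(c+1) y^d,
     (x^a y^b (x) x^c y^d) (1 (x) y) = x^a y^b (x) x^c y^(d+1).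
   Delta_e q (n, m) (c1, c2) is the coefficient of e_c1 (x) e_c2 in Delta(x^n y^m). *)
Fixpoint Delta_aux (k : fieldType) (q : k) (n : int) (m : nat) (c1 c2 : B) : k :=
  match m with
  | 0%N => ((c1 == (n, 0%N)) && (c2 == (n, 0%N)))%:R
  | m'.+1 =>
      (if (0 < c1.2)%N
       then q ^+ c2.2 * Delta_aux q n m' (c1.1, c1.2.-1) (c2.1 - 1, c2.2)
       else 0)
    + (if (0 < c2.2)%N then Delta_aux q n m' c1 (c2.1, c2.2.-1) else 0)
  end.

Definition Delta_e (k : fieldType) (q : k) (b : B) (c1 c2 : B) : k :=
  Delta_aux q b.1 b.2 c1 c2.

Definition eps_e (k : fieldType) (b : B) : k := (b.2 == 0%N)%:R.

Definition Delta (k : fieldType) (q : k) (v : B -> k) (c1 c2 : B) : k :=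
  \sum_(a \in [set: B]) v a * Delta_e q a c1 c2.

Definition eps (k : fieldType) (v : B -> k) : k :=
  \sum_(a \in [set: B]) v a * eps_e k a.

Definition tensor_app_Delta (k : fieldType) (q : k) (M : B -> B -> k) (b : B)
    (c1 c2 : B) : k :=
  \sum_(a \in [set: B * B]) Delta_e q b a.1 a.2 * M a.1 c1 * M a.2 c2.

(* M is a coalgebra map: Delta o phi = (phi (x) phi) o Delta and eps o phi = eps
   (checked on the basis, which suffices by linearity). *)
Definition is_coalg_map (k : fieldType) (q : k) (M : B -> B -> k) : Prop :=
  is_endo M /\
  (forall b c1 c2, Delta q (M b) c1 c2 = tensor_app_Delta q M b c1 c2) /\
  (forall b, eps (M b) = eps_e k b).

(* Aut_c(H): bijective coalgebra maps (bijectivity = existence of a two-sided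
   linear inverse). *)
Definition Autc (k : fieldType) (q : k) (M : B -> B -> k) : Prop :=
  is_coalg_map q M /\
  exists N : B -> B -> k, is_endo N /\ lcomp M N = idm k /\ lcomp N M = idm k.

Definition Aut0 (k : fieldType) (q : k) (M : B -> B -> k) : Prop :=
  Autc q M /\ M (0%Z, 0%N) = ebasis k (0%Z, 0%N).

Definition theta (k : fieldType) (r : int) : B -> B -> k :=
  fun b => ebasis k (b.1 + r, b.2).

(* A coalgebra automorphism permutes the grouplikes x^n.  If it sends x^n and
   x^(n+1) to x^t and x^t', it sends x^n y to an (x^t, x^t')-skew primitive
   element; as q is not a root of unity, such elements are combinations of x^t
   and x^t' unless t' = t + 1, and injectivity excludes that case.  Hence every
   automorphism acts on grouplikes as a translation x^n |-> x^(n+s): composing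
   with theta_(-s) lands in Aut_0(H), and conjugation preserves translation by 0. *)

From HB Require Import structures.
From mathcomp Require Import all_boot all_order all_algebra.
From mathcomp Require Import boolp classical_sets cardinality fsbigop ring zify.
Import GRing.Theory.
Local Open Scope ring_scope.
Set Implicit Arguments.
Unset Strict Implicit.

Section FiniteSums.
Variable k : fieldType.

Definition supp_in (T : eqType) (v : T -> k) (s : seq T) := forall i, v i != 0 -> i \in s.

Lemma finsuppP (T : choiceType) (v : T -> k) : finsupp v <-> exists s, supp_in v s.
Proof.
split=> [/finite_seqP[s hs]|[s hs]].
  by exists s => i hi; have : [set t | v t != 0]%classic i by []; rewrite hs.
by apply: (sub_finite_set _ (finite_seq s)) => i /= /hs.
Qed.

Lemma fsumT_seq (T : choiceType) (s : seq T) (F : T -> k) : uniq s -> supp_in F s ->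
  \sum_(i \in [set: T]) F i = \sum_(i <- s) F i.
Proof.
move=> us hs; rewrite (fsbigE s) // => [|i _]; last by apply: contraNeq => /hs.
by apply: eq_bigl => i; rewrite in_setT.
Qed.

Lemma fsumT_undup (T : choiceType) (s : seq T) (F : T -> k) : supp_in F s ->
  \sum_(i \in [set: T]) F i = \sum_(i <- undup s) F i.
Proof. by move=> hs; apply: fsumT_seq; rewrite ?undup_uniq // => i /hs; rewrite mem_undup. Qed.

Lemma fsumT1 (T : choiceType) (a0 : T) (F : T -> k) :
  (forall a, a != a0 -> F a = 0) -> \sum_(a \in [set: T]) F a = F a0.
Proof.
move=> h; rewrite (@fsumT_seq _ [:: a0]) ?big_seq1 // => i.
by apply: contraR; rewrite inE => /h ->.
Qed.

Lemma fsumT2 (T : choiceType) (a0 a1 : T) (F : T -> k) : a0 != a1 ->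
  (forall a, a != a0 -> a != a1 -> F a = 0) ->
  \sum_(a \in [set: T]) F a = F a0 + F a1.
Proof.
move=> ne h; rewrite (@fsumT_seq _ [:: a0; a1]) /= ?inE ?ne //.
  by rewrite !big_cons big_nil addr0.
by move=> i; apply: contraR; rewrite !inE negb_or => /andP[/h H /H ->].
Qed.

Lemma fsumT_neq0 (T : choiceType) (F : T -> k) :
  \sum_(a \in [set: T]) F a != 0 -> exists a, F a != 0.
Proof.
apply: contraNP => /forallNP h; apply/eqP; apply: fsbig1 => i _.
by move: (h i) => /negP; rewrite negbK => /eqP.
Qed.

Lemma sum_neq0 (T : Type) (s : seq T) (F : T -> k) :
  \sum_(a <- s) F a != 0 -> exists a, F a != 0.
Proof.
apply: contraNP => /forallNP h; apply/eqP; apply: big1 => i _.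
by move: (h i) => /negP; rewrite negbK => /eqP.
Qed.

Lemma exchange_fsumT (T U : choiceType) (F : T -> U -> k) (s : seq T) (r : seq U) :
  (forall a p, F a p != 0 -> a \in s /\ p \in r) ->
  \sum_(p \in [set: U]) \sum_(a \in [set: T]) F a p =
  \sum_(a \in [set: T]) \sum_(p \in [set: U]) F a p.
Proof.
move=> h.
under eq_fsbigr => p _ do rewrite (@fsumT_undup _ s) => [|a /h[]//].
under [RHS]eq_fsbigr => a _ do rewrite (@fsumT_undup _ r) => [|p /h[]//].
rewrite (@fsumT_undup _ r); last by move=> p /sum_neq0[a /h[]].
rewrite (@fsumT_undup _ s); last by move=> a /sum_neq0[p /h[]].
exact: exchange_big.
Qed.

Lemma pair_fsumT (T U : choiceType) (F : T * U -> k) (s : seq T) (r : seq U) :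
  (forall a p, F (a, p) != 0 -> a \in s /\ p \in r) ->
  \sum_(x \in [set: T * U]) F x =
  \sum_(a \in [set: T]) \sum_(p \in [set: U]) F (a, p).
Proof.
move=> h.
under [RHS]eq_fsbigr => a _ do rewrite (@fsumT_undup _ r) => [|p /h[]//].
rewrite [RHS](@fsumT_undup _ s); last by move=> a /sum_neq0[p /h[]].
rewrite (@fsumT_seq _ (allpairs pair (undup s) (undup r))) ?big_allpairs //.
  by apply: allpairs_uniq => //; rewrite ?undup_uniq // => -[? ?] [? ?].
by move=> [a p] /h[ha hp]; apply/allpairsP; exists (a, p); rewrite !mem_undup.
Qed.

End FiniteSums.

Section Matrices.
Variable k : fieldType.
Implicit Types I J K L : choiceType.

(* Linear maps between spaces with bases I and J, given by the images of the
   basis vectors; [app], [lcomp] and [idm] are the case I = J = B. *)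
Definition mapp I J (M : I -> J -> k) (v : I -> k) : J -> k :=
  fun c => \sum_(b \in [set: I]) v b * M b c.

Definition mcomp I J K (M : J -> K -> k) (N : I -> J -> k) : I -> K -> k :=
  fun b => mapp M (N b).

Definition mdelta I : I -> I -> k := fun b c => (b == c)%:R.

Definition row_finite I J (M : I -> J -> k) := forall b, finsupp (M b).

Definition mtensor I J (M : I -> J -> k) : I * I -> J * J -> k :=
  fun a c => M a.1 c.1 * M a.2 c.2.

Lemma row_finite_seq I J (M : I -> J -> k) :
  row_finite M -> exists f : I -> seq J, forall b, supp_in (M b) (f b).
Proof.
move=> hM; have /choice[f hf] : forall b, exists s, supp_in (M b) s.
  by move=> b; apply/finsuppP.
by exists f.
Qed.

Lemma mapp_supp I J (M : I -> J -> k) (f : I -> seq J) v s :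
  (forall b, supp_in (M b) (f b)) -> supp_in v s ->
  supp_in (mapp M v) (flatten [seq f b | b <- s]).
Proof.
move=> hf hs c /fsumT_neq0[b]; rewrite mulf_eq0 negb_or => /andP[/hs sb /hf fb].
by apply/flatten_mapP; exists b.
Qed.

Lemma mapp_finsupp I J (M : I -> J -> k) v :
  row_finite M -> finsupp v -> finsupp (mapp M v).
Proof.
move=> /row_finite_seq[f hf] /finsuppP[s hs]; apply/finsuppP.
by exists (flatten [seq f b | b <- s]); apply: mapp_supp.
Qed.

Lemma row_finite_mcomp I J K (M : J -> K -> k) (N : I -> J -> k) :
  row_finite M -> row_finite N -> row_finite (mcomp M N).
Proof. by move=> hM hN b; apply: mapp_finsupp. Qed.

Lemma mappA I J K (M : J -> K -> k) (N : I -> J -> k) v :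
  row_finite N -> finsupp v -> mapp M (mapp N v) = mapp (mcomp M N) v.
Proof.
move=> /row_finite_seq[f hf] /finsuppP[s hs]; apply/funext => c.
rewrite /mapp /mcomp; under eq_fsbigr => b _ do rewrite mulr_fsuml.
rewrite (@exchange_fsumT _ _ _ _ s (flatten [seq f a | a <- s])); last first.
  move=> a b; rewrite !mulf_eq0 !negb_or => /andP[/andP[/hs sa /hf fb] _].
  by split=> //; apply/flatten_mapP; exists a.
apply: eq_fsbigr => a _; rewrite /mapp mulr_fsumr.
by apply: eq_fsbigr => b _; rewrite mulrA.
Qed.

Lemma mcompA I J K L (M : K -> L -> k) (N : J -> K -> k) (P : I -> J -> k) :
  row_finite N -> row_finite P -> mcomp M (mcomp N P) = mcomp (mcomp M N) P.
Proof. by move=> hN hP; apply/funext => b; apply: mappA. Qed.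

Lemma mapp_delta I J (M : I -> J -> k) b : mapp M (mdelta b) = M b.
Proof.
apply/funext => c; rewrite /mapp (@fsumT1 _ _ b) /mdelta ?eqxx ?mul1r // => a.
by rewrite eq_sym => /negbTE ->; rewrite mul0r.
Qed.

Lemma mapp1 I (v : I -> k) : mapp (@mdelta I) v = v.
Proof.
apply/funext => c; rewrite /mapp (@fsumT1 _ _ c) /mdelta ?eqxx ?mulr1 // => a.
by move=> /negbTE ->; rewrite mulr0.
Qed.

Lemma mapp_mdelta2 I J (M : I -> J -> k) a0 a1 : a0 != a1 ->
  mapp M (fun c => mdelta a0 c + mdelta a1 c) = fun c => M a0 c + M a1 c.
Proof.
move=> ne; apply/funext => c; rewrite /mapp (@fsumT2 _ _ a0 a1) // => [|a h0 h1].
  by rewrite /mdelta !eqxx (negbTE ne) eq_sym (negbTE ne) addr0 add0r !mul1r.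
by rewrite /mdelta ![_ == a]eq_sym (negbTE h0) (negbTE h1) addr0 mul0r.
Qed.

Lemma mcomp_mdelta_map I J K (M : J -> K -> k) (f : I -> J) :
  mcomp M (fun b => mdelta (f b)) = fun b => M (f b).
Proof. by apply/funext => b; apply: mapp_delta. Qed.

Lemma mcompm1 I J (M : I -> J -> k) : mcomp M (@mdelta I) = M.
Proof. by apply/funext => b; apply: mapp_delta. Qed.

Lemma mcomp1m I J (M : I -> J -> k) : mcomp (@mdelta J) M = M.
Proof. by apply/funext => b; apply: mapp1. Qed.

Lemma mapp_perm I (f g : I -> I) (v : I -> k) : cancel f g -> cancel g f ->
  mapp (fun b => mdelta (f b)) v = v \o g.
Proof.
move=> fK gK; apply/funext => c; rewrite /mapp (@fsumT1 _ _ (g c)) /=; last first.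
  move=> a; apply: contraNeq; rewrite /mdelta; case: (f a =P c) => [<- _|_].
    by rewrite fK.
  by rewrite mulr0 eqxx.
by rewrite /mdelta gK eqxx mulr1.
Qed.

Lemma row_finite_mdelta_map I J (f : I -> J) : row_finite (fun b => mdelta (f b)).
Proof.
move=> b; apply/finsuppP; exists [:: f b] => c; rewrite /mdelta inE [c == _]eq_sym.
by case: (f b == c); rewrite ?eqxx.
Qed.

Lemma mdelta_pair I J (a1 c1 : I) (a2 c2 : J) :
  mdelta a1 c1 * mdelta a2 c2 = mdelta (a1, a2) (c1, c2).
Proof. by rewrite /mdelta xpair_eqE -natrM mulnb. Qed.

Lemma mtensor_mdelta_map I J (f : I -> J) :
  mtensor (fun b => mdelta (f b)) = fun a => mdelta (f a.1, f a.2).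
Proof.
by apply/funext => a; apply/funext => c; rewrite /mtensor mdelta_pair -surjective_pairing.
Qed.

Lemma row_finite_mdelta I : row_finite (@mdelta I).
Proof. exact: (row_finite_mdelta_map (fun b : I => b)). Qed.

Lemma mtensor1 I : mtensor (@mdelta I) = @mdelta _.
Proof. by apply/funext => -[a1 a2]; apply/funext => -[c1 c2]; apply: mdelta_pair. Qed.

Lemma row_finite_mtensor I J (M : I -> J -> k) : row_finite M -> row_finite (mtensor M).
Proof.
move=> /row_finite_seq[f hf] a; apply/finsuppP; exists (allpairs pair (f a.1) (f a.2)).
move=> c; rewrite mulf_eq0 negb_or => /andP[/hf c1 /hf c2].
by apply/allpairsP; exists c; rewrite -surjective_pairing.
Qed.

Lemma mtensor_comp I J K (M : J -> K -> k) (N : I -> J -> k) :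
  row_finite N -> mtensor (mcomp M N) = mcomp (mtensor M) (mtensor N).
Proof.
move=> /row_finite_seq[f hf]; apply/funext => a; apply/funext => c.
rewrite /mtensor /mcomp /mapp (@pair_fsumT _ _ _ _ (f a.1) (f a.2)); last first.
  by move=> p1 p2; rewrite !mulf_eq0 !negb_or => /andP[/andP[/hf ? /hf ?] _].
rewrite mulr_fsuml; apply: eq_fsbigr => p1 _; rewrite mulr_fsumr.
by apply: eq_fsbigr => p2 _ /=; ring.
Qed.

End Matrices.

Section Comultiplication.
Variables (k : fieldType) (q : k).

Definition qint (m : nat) : k := \sum_(i < m) q ^+ i.

Lemma Delta_aux_supp n m (c1 c2 : B) : Delta_aux q n m c1 c2 != 0 ->
  [/\ c1.1 = n, c2.1 = n + (c1.2)%:Z & (c1.2 + c2.2)%N = m].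
Proof.
elim: m c1 c2 => [|m IH] [a1 b1] [a2 b2] /=.
  case: ((a1, b1) =P (n, 0%N)) => [[-> ->]|]; last by rewrite eqxx.
  by case: ((a2, b2) =P (n, 0%N)) => [[-> ->]|]; rewrite ?addr0 ?andbF ?eqxx.
have shift_a2 : a2 - 1 = n + (b1.-1)%:Z -> (0 < b1)%N -> a2 = n + b1%:Z.
  by move=> /eqP; rewrite subr_eq => /eqP -> hb1; rewrite -addrA -PoszD addn1 prednK.
case: (ltnP 0 b1) => hb1; case: (ltnP 0 b2) => hb2 /=; rewrite ?addr0 ?add0r ?eqxx //.
- move=> h; have [h1|h2] : (q ^+ b2 * Delta_aux q n m (a1, b1.-1) (a2 - 1, b2) != 0) \/
      (Delta_aux q n m (a1, b1) (a2, b2.-1) != 0).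
    apply/orP; apply: contraR h; rewrite negb_or !negbK.
    by move=> /andP[/eqP -> /eqP ->]; rewrite addr0.
  + move: h1; rewrite mulf_eq0 negb_or => /andP[_ /IH[/= -> /shift_a2 -> // <-]].
    by rewrite -addSn prednK.
  + by move/IH: h2 => [/= -> -> <-]; rewrite -addnS prednK.
- move: hb2; rewrite leqn0 => /eqP ->.
  rewrite mulf_eq0 negb_or => /andP[_ /IH[/= -> /shift_a2 -> // <-]].
  by rewrite -addSn prednK.
- by move: hb1; rewrite leqn0 => /eqP -> /IH[/= -> -> <-]; rewrite -addnS prednK.
Qed.

Lemma Delta_auxS n m c1 c2 : Delta_aux q n m.+1 c1 c2 =
    (if (0 < c1.2)%N
     then q ^+ c2.2 * Delta_aux q n m (c1.1, c1.2.-1) (c2.1 - 1, c2.2)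
     else 0)
  + (if (0 < c2.2)%N then Delta_aux q n m c1 (c2.1, c2.2.-1) else 0).
Proof. by []. Qed.

Lemma Delta_aux_x_l n m : Delta_aux q n m (n, 0%N) (n, m) = 1.
Proof. by elim: m => [|m IH] /=; rewrite ?eqxx // add0r IH. Qed.

Local Arguments Delta_aux : simpl never.

Lemma Delta_aux_y_l n m : Delta_aux q n m.+1 (n, 1%N) (n + 1, m) = qint m.+1.
Proof.
elim: m => [|m IH].
  by rewrite Delta_auxS /= addrK addr0 /Delta_aux !eqxx /qint big_ord1 expr0 mulr1.
by rewrite Delta_auxS /= addrK Delta_aux_x_l mulr1 IH /qint [RHS]big_ord_recr addrC.
Qed.

Lemma Delta_aux_shift r n m (c1 c2 : B) :
  Delta_aux q (n + r) m c1 c2 = Delta_aux q n m (c1.1 - r, c1.2) (c2.1 - r, c2.2).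
Proof.
elim: m c1 c2 => [|m IH] [a1 b1] [a2 b2].
  by rewrite /Delta_aux /= !xpair_eqE !subr_eq.
by rewrite !Delta_auxS IH /= IH /= addrAC.
Qed.

End Comultiplication.

Section CoalgebraMaps.
Variables (k : fieldType) (q : k).

(* Comultiplication and counit as maps out of H, so that [Delta q v c1 c2] is
   [mapp DeltaM v (c1, c2)] and [eps v] is [mapp epsM v tt]. *)
Definition DeltaM : B -> B * B -> k := fun b c => Delta_e q b c.1 c.2.

Definition epsM : B -> unit -> k := fun b _ => eps_e k b.

Lemma lcompE (M N : B -> B -> k) : lcomp M N = mcomp M N.
Proof. by []. Qed.

Lemma idmE : idm k = @mdelta k B.
Proof. by []. Qed.

Lemma row_finite_DeltaM : row_finite DeltaM.
Proof.
move=> b; apply/finsuppP.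
exists [seq ((b.1, i), (b.1 + i%:Z, (b.2 - i)%N)) | i <- iota 0 b.2.+1].
move=> [[x1 y1] [x2 y2]] /Delta_aux_supp[e1 e2 e3]; apply/mapP; exists y1.
  by move: e3; rewrite mem_iota /= => <-; rewrite ltnS leq_addr.
by move: e1 e2 e3 => /= -> -> <-; rewrite addKn.
Qed.

Lemma is_coalg_mapE (M : B -> B -> k) : is_coalg_map q M <->
  [/\ row_finite M, mcomp DeltaM M = mcomp (mtensor M) DeltaM & mcomp epsM M = epsM].
Proof.
split=> [[rM [hD he]]|[rM hD he]]; split=> //.
- apply/funext => b; apply/funext => -[c1 c2].
  by rewrite [LHS]hD; apply: eq_fsbigr => a _; rewrite mulrA.
- by apply/funext => b; apply/funext => -[]; apply: he.
split=> [b c1 c2|b]; last by have /(congr1 (fun F => F b tt)) := he.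
rewrite -[LHS]/(mcomp DeltaM M b (c1, c2)) hD.
by apply: eq_fsbigr => a _; rewrite mulrA.
Qed.

Lemma coalg_map_id : is_coalg_map q (idm k).
Proof.
rewrite is_coalg_mapE idmE mtensor1 mcomp1m.
by split; [exact: row_finite_mdelta | exact: mcompm1 ..].
Qed.

Lemma coalg_map_comp (M N : B -> B -> k) : is_coalg_map q M -> is_coalg_map q N ->
  is_coalg_map q (lcomp M N).
Proof.
rewrite !is_coalg_mapE lcompE => -[rM dM eM] [rN dN eN]; have rD := row_finite_DeltaM.
split; first exact: row_finite_mcomp.
  rewrite (mcompA _ rM rN) dM -(mcompA _ rD rN) dN.
  by rewrite (mcompA _ (row_finite_mtensor rN) rD) -mtensor_comp.
by rewrite (mcompA _ rM rN) eM.
Qed.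

Lemma coalg_map_inv (M N : B -> B -> k) : is_coalg_map q M -> is_endo N ->
  lcomp M N = idm k -> lcomp N M = idm k -> is_coalg_map q N.
Proof.
rewrite !is_coalg_mapE !lcompE idmE => -[rM dM eM] rN MN NM; split=> //.
  have rD := row_finite_DeltaM; have rDN := row_finite_mcomp rD rN.
  have -> : mcomp DeltaM N = mcomp (mtensor N) (mcomp (mtensor M) (mcomp DeltaM N)).
    rewrite (mcompA _ (row_finite_mtensor rM) rDN) -mtensor_comp // NM.
    by rewrite mtensor1 mcomp1m.
  by rewrite [mcomp (mtensor M) _](mcompA _ rD rN) -dM -(mcompA _ rM rN) MN mcompm1.
by rewrite -eM -(mcompA _ rM rN) MN mcompm1.
Qed.

End CoalgebraMaps.

Section AutomorphismGroup.
Variables (k : fieldType) (q : k).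

Lemma Autc_id : Autc q (idm k).
Proof.
split; first exact: coalg_map_id.
by exists (idm k); rewrite lcompE idmE mcompm1; split=> //; exact: row_finite_mdelta.
Qed.

Lemma Autc_comp (M N : B -> B -> k) : Autc q M -> Autc q N -> Autc q (lcomp M N).
Proof.
move=> [cM [M' [rM' [MM' M'M]]]] [cN [N' [rN' [NN' N'N]]]].
have [[rM _] [rN _]] := (cM, cN).
split; first exact: coalg_map_comp.
exists (lcomp N' M'); split; first exact: row_finite_mcomp.
move: MM' M'M NN' N'N; rewrite !lcompE idmE => MM' M'M NN' N'N; split.
  by rewrite (mcompA _ rN' rM') -(mcompA _ rN rN') NN' mcompm1.
by rewrite (mcompA _ rM rN) -(mcompA _ rM' rM) M'M mcompm1.
Qed.

Lemma Autc_inv (M N : B -> B -> k) : Autc q M -> is_endo N ->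
  lcomp M N = idm k -> lcomp N M = idm k -> Autc q N.
Proof.
move=> [cM _] rN MN NM; split; first exact: (coalg_map_inv cM).
by exists M; split=> //; case: cM.
Qed.

Definition shiftB (r : int) (b : B) : B := (b.1 + r, b.2).

Lemma thetaE r : theta k r = fun b => mdelta k (shiftB r b).
Proof. by []. Qed.

Lemma shiftBK r : cancel (shiftB r) (shiftB (- r)).
Proof. by move=> b; rewrite /shiftB /= addrK; case: b. Qed.

Lemma shiftBNK r : cancel (shiftB (- r)) (shiftB r).
Proof. by move=> b; rewrite /shiftB /= addrNK; case: b. Qed.

Lemma theta_coalg r : is_coalg_map q (theta k r).
Proof.
rewrite is_coalg_mapE thetaE (mtensor_mdelta_map k) !mcomp_mdelta_map.
split; first exact: row_finite_mdelta_map.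
  apply/funext => b; apply/funext => -[c1 c2]; rewrite /mcomp.
  rewrite (mapp_perm (f := fun a => (shiftB r a.1, shiftB r a.2))
                     (g := fun a => (shiftB (- r) a.1, shiftB (- r) a.2))).
  - exact: Delta_aux_shift.
  - by move=> [a1 a2]; rewrite /= !shiftBK.
  - by move=> [a1 a2]; rewrite /= !shiftBNK.
by apply/funext => b; apply/funext => -[].
Qed.

Lemma theta0 : theta k 0 = idm k.
Proof. by apply/funext => -[b1 b2]; rewrite /theta /= addr0. Qed.

Lemma theta_comp r s : lcomp (theta k r) (theta k s) = theta k (r + s).
Proof.
rewrite lcompE [theta k s]thetaE mcomp_mdelta_map.
by apply/funext => b; rewrite /theta /shiftB /= -addrA (addrC s).
Qed.

Lemma theta_endo r : is_endo (theta k r).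
Proof. exact: row_finite_mdelta_map. Qed.

Lemma theta_Autc r : Autc q (theta k r).
Proof.
split; first exact: theta_coalg.
exists (theta k (- r)); split; first exact: theta_endo.
by rewrite !theta_comp subrr addNr theta0.
Qed.

End AutomorphismGroup.

Section Grouplikes.
Variables (k : fieldType) (q : k).

Lemma ebasis_neq (a b : B) : a != b -> ebasis k a b = 0.
Proof. by rewrite /ebasis => /negbTE ->. Qed.

Lemma ebasis_inj : injective (ebasis k).
Proof.
move=> a b /(congr1 (fun f => f a)); rewrite /ebasis eqxx.
by case: (b =P a) => // _ /eqP; rewrite mulr1n mulr0n oner_eq0.
Qed.

Lemma ebasis_eq1 (a b : B) : ebasis k a b = 1 -> a = b.
Proof. by rewrite /ebasis; case: eqP => // _ /eqP; rewrite mulr0n eq_sym oner_eq0. Qed.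

Lemma Delta_pointE (v : B -> k) c1 c2 :
  Delta q v c1 c2 = v (c1.1, (c1.2 + c2.2)%N) * Delta_e q (c1.1, (c1.2 + c2.2)%N) c1 c2.
Proof.
rewrite /Delta (@fsumT1 _ _ (c1.1, (c1.2 + c2.2)%N)) // => a ha.
apply/eqP; rewrite mulf_eq0; apply/orP; right; apply: contraR ha.
by move=> /Delta_aux_supp[-> _ ->]; rewrite -surjective_pairing.
Qed.

Lemma grouplike_basis (v : B -> k) :
  (forall c1 c2, Delta q v c1 c2 = v c1 * v c2) -> eps v = 1 ->
  exists j : int, v = ebasis k (j, 0%N).
Proof.
move=> hD he.
have vy b : b.2 != 0%N -> v b = 0.
  move=> hb; apply/eqP; rewrite -[v b == 0]orbb -mulf_eq0 -hD Delta_pointE.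
  rewrite mulf_eq0; apply/orP; right; apply: contraR hb.
  move=> /Delta_aux_supp[_ /= + _]; rewrite -{1}(addr0 b.1).
  by move=> /addrI[<-].
have vx i j : v (i, 0%N) * v (j, 0%N) = ((j, 0%N) == (i, 0%N))%:R * v (i, 0%N).
  rewrite -hD Delta_pointE /= mulrC; congr (_ * _).
  by rewrite /Delta_e /Delta_aux /= eqxx.
have [[j m] /=] : exists a, v a * eps_e k a != 0.
  by apply: fsumT_neq0; rewrite -/(eps v) he oner_neq0.
rewrite mulf_eq0 negb_or => /andP[vjm _]; have m0 : m = 0%N.
  by apply/eqP; apply: contraR vjm => /(vy (j, m)) ->.
move: vjm; rewrite m0 => vj0.
have vj : v (j, 0%N) = 1.
  apply: (mulfI vj0); rewrite mulr1.
  by have := vx j j; rewrite eqxx mul1r.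
exists j; apply/funext => -[i n]; rewrite /ebasis.
case: (eqVneq n 0%N) => [->|n0]; last by rewrite vy // xpair_eqE [0%N == _]eq_sym (negbTE n0) andbF.
case: (eqVneq (j, 0%N) (i, 0%N)) => [[<-]|ji]; first by rewrite vj.
by have := vx i j; rewrite vj mulr1 (negbTE ji) mul0r => ->.
Qed.

Lemma DeltaM_x n : DeltaM q (n, 0%N) = mdelta k ((n, 0%N), (n, 0%N)).
Proof.
apply/funext => -[c1 c2]; rewrite /DeltaM /Delta_e /Delta_aux /mdelta /=.
by rewrite xpair_eqE ![(n, 0%N) == _]eq_sym.
Qed.

Lemma coalg_map_grouplike (M : B -> B -> k) n : is_coalg_map q M ->
  exists j, M (n, 0%N) = ebasis k (j, 0%N).
Proof.
move=> /is_coalg_mapE[_ hD he]; apply: grouplike_basis => [c1 c2|].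
  have := congr1 (fun F => F (n, 0%N) (c1, c2)) hD.
  by rewrite /mcomp DeltaM_x mapp_delta.
exact: (congr1 (fun F => F (n, 0%N) tt) he).
Qed.

End Grouplikes.

Section SkewPrimitives.
Variables (k : fieldType) (q : k).
Hypothesis q_not_root1 : forall n : nat, (0 < n)%N -> q ^+ n != 1.

Definition skew_primitive (t t' : int) (w : B -> k) :=
  forall c1 c2, Delta q w c1 c2 = w c1 * ebasis k (t', 0%N) c2 + ebasis k (t, 0%N) c1 * w c2.

Lemma qint_neq0 m : qint q m.+1 != 0.
Proof.
apply: (contraTneq _ (q_not_root1 (ltn0Sn m))) => qm0.
by rewrite negbK -subr_eq0 subrX1 -/(qint q m.+1) qm0 mulr0.
Qed.

Lemma DeltaM_y n : DeltaM q (n, 1%N) =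
  fun c => mdelta k ((n, 1%N), (n + 1, 0%N)) c + mdelta k ((n, 0%N), (n, 1%N)) c.
Proof.
apply/funext => -[[x1 [|[|y1]]] [x2 [|[|y2]]]];
  rewrite /DeltaM /Delta_e /mdelta /= ?xpair_eqE ?andbT ?andbF ?expr0 ?mul1r;
  by rewrite ?mul0r ?addr0 ?add0r ?subr_eq ?[_ == x1]eq_sym ?[_ == x2]eq_sym ?mulr0n ?mulr0.
Qed.

Lemma coalg_map_skew_primitive (M : B -> B -> k) n t t' : is_coalg_map q M ->
  M (n, 0%N) = ebasis k (t, 0%N) -> M (n + 1, 0%N) = ebasis k (t', 0%N) ->
  skew_primitive t t' (M (n, 1%N)).
Proof.
move=> /is_coalg_mapE[_ hD _] Mn Mn1 c1 c2.
rewrite -[LHS]/(mcomp (DeltaM q) M (n, 1%N) (c1, c2)) hD /mcomp DeltaM_y.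
by rewrite mapp_mdelta2 ?xpair_eqE ?andbF // /mtensor /= Mn Mn1.
Qed.

Local Arguments Delta_aux : simpl never.

Lemma skew_primitive_high t t' w j m : skew_primitive t t' w -> w (j, m.+2) = 0.
Proof.
move=> /(_ (j, 1%N) (j + 1, m.+1)); rewrite Delta_pointE /Delta_e /= Delta_aux_y_l.
rewrite !ebasis_neq ?xpair_eqE ?andbF // mulr0 mul0r addr0 => /eqP.
by rewrite mulf_eq0 (negbTE (qint_neq0 _)) orbF => /eqP.
Qed.

Lemma skew_primitive_supp t t' w b : skew_primitive t t' w -> t' != t + 1 ->
  b != (t, 0%N) -> b != (t', 0%N) -> w b = 0.
Proof.
move=> hw ht; case: b => j [|[|m]] bt bt'; last exact: skew_primitive_high hw.
  have := hw (j, 0%N) (j, 0%N); rewrite Delta_pointE /Delta_e /Delta_aux /= !eqxx mulr1.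
  by rewrite !ebasis_neq 1?eq_sym // mulr0 mul0r addr0.
apply/eqP; apply: contraTT ht; rewrite negbK => wn.
have /eqP : w (j, 1%N) * (1 - ebasis k (t', 0%N) (j + 1, 0%N)) = 0.
  have := hw (j, 1%N) (j + 1, 0%N).
  rewrite Delta_pointE /Delta_e /= (Delta_aux_y_l _ _ 0) /qint big_ord1 expr0 mulr1.
  rewrite (@ebasis_neq _ (t, 0%N)) ?xpair_eqE ?andbF // mul0r addr0 mulrBr mulr1.
  by move=> {1}->; rewrite subrr.
have /eqP : (1 - ebasis k (t, 0%N) (j, 0%N)) * w (j, 1%N) = 0.
  have := hw (j, 0%N) (j, 1%N).
  rewrite Delta_pointE /Delta_e /= Delta_aux_x_l mulr1.
  rewrite (@ebasis_neq _ (t', 0%N)) ?xpair_eqE ?andbF // mulr0 add0r mulrBl mul1r.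
  by move=> {1}->; rewrite subrr.
rewrite !mulf_eq0 (negbTE wn) orbF orFb !subr_eq0.
by move=> /eqP/esym/ebasis_eq1[<-] /eqP/esym/ebasis_eq1[->].
Qed.
Lemma coalg_aut_grouplike_succ (M N : B -> B -> k) n t t' :
  is_coalg_map q M -> lcomp N M = idm k ->
  M (n, 0%N) = ebasis k (t, 0%N) -> M (n + 1, 0%N) = ebasis k (t', 0%N) -> t' = t + 1.
Proof.
move=> cM NM Mn Mn1; apply/eqP; apply: contraT => ht.
(* N maps M (n, 1) back to x^n y, yet M (n, 1) lies in the span of x^t and x^t',
   which N maps to x^n and x^(n+1). *)
have w0 := skew_primitive_supp (coalg_map_skew_primitive cM Mn Mn1) ht.
have NMb b : mapp N (M b) = ebasis k b by rewrite -/(mcomp N M b) -lcompE NM.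
have Nt : N (t, 0%N) = ebasis k (n, 0%N) by have := NMb (n, 0%N); rewrite Mn mapp_delta.
have Nt' : N (t', 0%N) = ebasis k (n + 1, 0%N).
  by have := NMb (n + 1, 0%N); rewrite Mn1 mapp_delta.
have := congr1 (fun v => v (n, 1%N)) (NMb (n, 1%N)); rewrite /ebasis eqxx /=.
rewrite /mapp fsbig1 => [/eqP|b _]; first by rewrite eq_sym oner_eq0.
case: (eqVneq b (t, 0%N)) => [->|bt].
  by rewrite Nt ebasis_neq ?mulr0 // xpair_eqE andbF.
case: (eqVneq b (t', 0%N)) => [->|bt'].
  by rewrite Nt' ebasis_neq ?mulr0 // xpair_eqE andbF.
by rewrite w0 // mul0r.
Qed.

Lemma Autc_shift (M : B -> B -> k) : Autc q M ->
  exists s : int, forall n, M (n, 0%N) = ebasis k (n + s, 0%N).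
Proof.
move=> [cM [N [_ [_ NM]]]]; have [s Ms] := coalg_map_grouplike 0 cM; exists s.
have succ := coalg_aut_grouplike_succ cM NM.
elim/int_rec => [|n IH|n IH]; first by rewrite add0r.
  have [j Mj] := coalg_map_grouplike (n.+1)%:Z cM.
  have Sn : (n.+1)%:Z = n%:Z + 1 by lia.
  rewrite Mj (succ _ _ j IH); last by rewrite -Sn.
  by congr (ebasis k (_, _)); lia.
have [j Mj] := coalg_map_grouplike (- (n.+1)%:Z) cM.
have Sn : - n%:Z = - (n.+1)%:Z + 1 by lia.
rewrite Sn in IH; have := succ _ _ _ Mj IH => ej.
by rewrite Mj; congr (ebasis k (_, _)); lia.
Qed.

End SkewPrimitives.

Section Aut0Subgroup.
Variables (k : fieldType) (q : k).
Hypothesis q_not_root1 : forall n : nat, (0 < n)%N -> q ^+ n != 1.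

Lemma Aut0_grouplike (M : B -> B -> k) n : Aut0 q M -> M (n, 0%N) = ebasis k (n, 0%N).
Proof.
move=> [aM M0]; have [s Ms] := Autc_shift q_not_root1 aM.
have s0 : s = 0 by have := Ms 0; rewrite M0 add0r => /ebasis_inj[].
by rewrite Ms s0 addr0.
Qed.

Lemma Aut0_comp (M N : B -> B -> k) : Aut0 q M -> Aut0 q N -> Aut0 q (lcomp M N).
Proof.
move=> [aM M0] [aN N0]; split; first exact: Autc_comp.
by rewrite lcompE /mcomp N0 mapp_delta M0.
Qed.

Lemma Aut0_inv (M N : B -> B -> k) : Aut0 q M -> is_endo N ->
  lcomp M N = idm k -> lcomp N M = idm k -> Aut0 q N.
Proof.
move=> [aM M0] rN MN NM; split; first exact: (Autc_inv aM rN MN NM).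
by have := congr1 (fun F => F (0%Z, 0%N)) NM; rewrite lcompE /mcomp M0 mapp_delta.
Qed.

Lemma Aut0_conj (P M Pinv : B -> B -> k) : Autc q P -> Aut0 q M -> is_endo Pinv ->
  lcomp P Pinv = idm k -> lcomp Pinv P = idm k -> Aut0 q (lcomp (lcomp P M) Pinv).
Proof.
move=> aP aM rPinv PPinv PinvP; have aPinv := Autc_inv aP rPinv PPinv PinvP.
split; first by apply: Autc_comp => //; apply: Autc_comp => //; case: aM.
have [u Pinvu] : exists u, Pinv (0%Z, 0%N) = ebasis k (u, 0%N).
  by have [u Pu] := Autc_shift q_not_root1 aPinv; exists u; rewrite Pu add0r.
have Pu : P (u, 0%N) = ebasis k (0%Z, 0%N).
  by have := congr1 (fun F => F (0%Z, 0%N)) PPinv; rewrite lcompE /mcomp Pinvu mapp_delta.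
by rewrite !lcompE /mcomp Pinvu mapp_delta (Aut0_grouplike _ aM) mapp_delta Pu.
Qed.

Lemma Aut0_theta r : Aut0 q (theta k r) -> r = 0.
Proof. by move=> [_ /ebasis_inj[]]; rewrite add0r. Qed.

Lemma Autc_factor (M : B -> B -> k) : Autc q M ->
  exists N (r : int), Aut0 q N /\ M = lcomp N (theta k r).
Proof.
move=> aM; have [s Ms] := Autc_shift q_not_root1 aM.
exists (lcomp M (theta k (- s))), s; split.
  split; first exact: (Autc_comp aM (theta_Autc q (- s))).
  by rewrite lcompE /mcomp /theta /= add0r mapp_delta Ms addNr.
rewrite !lcompE -(mcompA _ (theta_endo k (- s)) (theta_endo k s)).
rewrite -[mcomp (theta k _) _]lcompE.
by rewrite theta_comp addNr theta0 idmE mcompm1.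
Qed.

End Aut0Subgroup.

Unset Implicit Arguments.

Theorem proposition2p4 (k : fieldType) (q : k)
  (hq0 : q != 0) (hq : forall n : nat, (0 < n)%N -> q ^+ n != 1) :
  (* Aut_0(H) is a subgroup of Aut_c(H) *)
  (forall M, Aut0 q M -> Autc q M) /\
  Aut0 q (idm k) /\
  (forall M N, Aut0 q M -> Aut0 q N -> Aut0 q (lcomp M N)) /\
  (forall M N, Aut0 q M -> is_endo N -> lcomp M N = idm k -> lcomp N M = idm k ->
     Aut0 q N) /\
  (* ... which is normal in Aut_c(H) *)
  (forall P M Pinv, Autc q P -> Aut0 q M -> is_endo Pinv ->
     lcomp P Pinv = idm k -> lcomp Pinv P = idm k ->
     Aut0 q (lcomp (lcomp P M) Pinv)) /\
  (* Theta = { theta_r : r in Z } is a subgroup of Aut_c(H) *)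
  (forall r : int, Autc q (theta k r)) /\
  theta k 0 = idm k /\
  (forall r s : int, lcomp (theta k r) (theta k s) = theta k (r + s)) /\
  (* Aut_0(H) /\ Theta = {id} *)
  (forall M, Aut0 q M -> (exists r : int, M = theta k r) -> M = idm k) /\
  (* Aut_c(H) = Aut_0(H) Theta *)
  (forall M, Autc q M ->
     exists N (r : int), Aut0 q N /\ M = lcomp N (theta k r)).
Proof.
split; first by move=> M [].
split; first by split; [exact: Autc_id|].
split; first exact: Aut0_comp.
split; first exact: Aut0_inv.
split; first exact: Aut0_conj.
split; first exact: theta_Autc.
split; first exact: theta0.
split; first exact: theta_comp.
split; first by move=> M aM [r Mr]; move: aM; rewrite Mr => /Aut0_theta ->; exact: theta0.
exact: Autc_factor.
Qed.
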